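(* Let $R=k[x_1,\ldots,x_m]$ be a polynomial ring over a field $k$ with graded maximal ideal $\mathfrak m=(x_1,\ldots,x_m)$, and let $I_1,I_2$ be non-zero proper monomial ideals of $R$ such that $\partial^*(I_1)\subseteq I_2$. Then $I_1\subseteq \mathfrak m I_2$, and there exists a map $\phi:\mathcal G(I_1)\to\mathcal G(I_2)$ such that for every non-empty subset $G'\subseteq \mathcal G(I_1)$, the monomial $\operatorname{lcm} G'$ belongs to the ideal $(\operatorname{lcm}\phi(G'))\mathfrak m$.
   Context: For a monomial ideal $L$, $\mathcal G(L)$ is its set of minimal monomial generators, and $\partial^*(L)$ is the ideal generated by all monomials $f/x_i$, where $f\in\mathcal G(L)$ and $x_i$ is a variable dividing $f$. For a set $G'$ of monomials, $\operatorname{lcm}G'$ is the least common multiple of its elements. *)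

From mathcomp Require Import all_boot all_algebra.
From mathcomp Require Import multinomials.mpoly.
Set Implicit Arguments. Unset Strict Implicit. Unset Printing Implicit Defensive.
Import GRing.Theory.
Local Open Scope ring_scope.

Section MonomialIdeals.
Variables (k : fieldType) (m : nat).
Local Notation R := {mpoly k[m]}.
Local Notation mon := 'X_{1..m}.

Definition ideal_gen (S : R -> Prop) : R -> Prop :=
  fun p => exists s : seq (R * R),
    (forall x, x \in s -> S x.2) /\ p = \sum_(x <- s) x.1 * x.2.

Definition monomial_ideal (L : R -> Prop) : Prop :=
  exists M : mon -> Prop,
    forall p, L p <-> ideal_gen (fun q => exists u, M u /\ q = 'X_[u]) p.

Definition mingens (L : R -> Prop) : mon -> Prop :=
  fun u => L 'X_[u] /\ forall v : mon, L 'X_[v] -> (v <= u)%MM -> v = u.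

Definition dstar (L : R -> Prop) : R -> Prop :=
  ideal_gen (fun q => exists (u : mon) (i : 'I_m),
     mingens L u /\ 0 < u i /\ q = 'X_[(u - U_(i))%MM])%N.

Definition maxideal : R -> Prop := ideal_gen (fun q => exists i : 'I_m, q = 'X_i).

Definition ideal_mul (I J : R -> Prop) : R -> Prop :=
  ideal_gen (fun q => exists a b, I a /\ J b /\ q = a * b).

Definition mon_ideal (u : mon) : R -> Prop := ideal_gen (fun q => q = 'X_[u]).

Definition mlcms (s : seq mon) : mon := foldr (@mlcm m) 0%MM s.

End MonomialIdeals.

From mathcomp Require Import all_boot all_algebra.
From mathcomp Require Import multinomials.mpoly.
From Stdlib Require Import Classical ClassicalEpsilon.
From mathcomp Require Import zify.
Set Implicit Arguments. Unset Strict Implicit.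
Import GRing.Theory.
Local Open Scope ring_scope.

(* For a minimal generator u of I1 let i be the least index with x_i | x^u.
   Then x^u / x_i lies in d*(I1), hence in I2: this gives I1 ⊆ m I2, and lets
   phi(u) be a minimal generator of I2 dividing x^u / x_i.  The map
   u |-> u - e_i is monotone for divisibility: if the least index j of a
   multiple L of u is smaller than i, then x_j does not divide x^u at all.
   So every phi(u), u in G', divides x^L / x_j for L = lcm G', that is,
   x^L lies in (lcm phi(G')) m. *)

Section MonomialIdeals.
Variables (k : fieldType) (m : nat).
Local Notation R := {mpoly k[m]}.
Local Notation mon := 'X_{1..m}.

Section IdealGen.
Variable S : R -> Prop.

Lemma ideal_gen_base q : S q -> ideal_gen S q.
Proof.
move=> Sq; exists [:: (1, q)]; rewrite big_seq1 mul1r; split=> //.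
by move=> x; rewrite mem_seq1 => /eqP->.
Qed.

Lemma ideal_gen0 : ideal_gen S 0.
Proof. by exists [::]; rewrite big_nil. Qed.

Lemma ideal_genD p q : ideal_gen S p -> ideal_gen S q -> ideal_gen S (p + q).
Proof.
move=> [s1 [S1 ->]] [s2 [S2 ->]]; exists (s1 ++ s2); rewrite big_cat; split=> //.
by move=> x; rewrite mem_cat => /orP[/S1|/S2].
Qed.

Lemma ideal_genMl r p : ideal_gen S p -> ideal_gen S (r * p).
Proof.
move=> [s [Ss ->]]; exists [seq (r * x.1, x.2) | x <- s]; split.
  by move=> y /mapP[x xs ->]; exact: Ss x xs.
by rewrite big_map mulr_sumr; apply: eq_bigr => x _; rewrite mulrA.
Qed.

End IdealGen.

Lemma ideal_gen_sub (S T : R -> Prop) :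
  (forall q, S q -> ideal_gen T q) -> forall p, ideal_gen S p -> ideal_gen T p.
Proof.
move=> ST p [s [Ss ->]]; elim: s Ss => [|x s IH] Ss.
  by rewrite big_nil; exact: ideal_gen0.
rewrite big_cons; apply: ideal_genD; first by apply/ideal_genMl/ST/Ss; rewrite mem_head.
by apply: IH => y ys; apply: Ss; rewrite inE ys orbT.
Qed.

Lemma mcoeffMX_neq0 (p : R) u v : (p * 'X_[u])@_v != 0 -> (u <= v)%MM.
Proof.
by rewrite -mcoeff_msupp (perm_mem (msuppMX p u)) => /mapP[w _ ->]; exact: lem_addr.
Qed.

Lemma mem_monomial_gen (M : mon -> Prop) v :
  ideal_gen (fun q => exists u, M u /\ q = 'X_[u]) ('X_[v] : R) ->
  exists2 u, M u & (u <= v)%MM.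
Proof.
move=> [s [Ss eXv]].
have : ('X_[v] : R)@_v != 0 by rewrite mcoeffX eqxx oner_neq0.
rewrite {}eXv; elim: s Ss => [|x s IH] Ss; first by rewrite big_nil mcoeff0 eqxx.
rewrite big_cons mcoeffD; have [x0|x_neq0 _] := eqVneq ((x.1 * x.2)@_v) 0.
  by rewrite x0 add0r; apply: IH => y ys; apply: Ss; rewrite inE ys orbT.
have [u [Mu ex]] := Ss x (mem_head _ _).
by exists u => //; apply: (@mcoeffMX_neq0 x.1); rewrite -ex.
Qed.

Lemma monomial_ideal_sub (L T : R -> Prop) :
  monomial_ideal L -> (forall u, L 'X_[u] -> ideal_gen T 'X_[u]) ->
  forall p, L p -> ideal_gen T p.
Proof.
move=> [M LM] LT p /LM; apply: ideal_gen_sub => _ [u [Mu ->]].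
by apply/LT/LM/ideal_gen_base; exists u.
Qed.

Lemma monomial_idealX_le (L : R -> Prop) v w :
  monomial_ideal L -> L 'X_[v] -> (v <= w)%MM -> L 'X_[w].
Proof.
move=> [M LM] /LM/mem_monomial_gen[u Mu uv] vw; apply/LM.
rewrite -(submK (lepm_trans uv vw)) mpolyXD; apply/ideal_genMl/ideal_gen_base.
by exists u.
Qed.

Lemma mdeg_lt (u v : mon) : (v <= u)%MM -> v <> u -> (mdeg v < mdeg u)%N.
Proof.
move=> vu v_neq_u; rewrite -(submK vu) mdegD -[X in (X < _)%N]add0n ltn_add2r.
rewrite lt0n mdeg_eq0; apply: contra_notN v_neq_u => /eqP e.
by rewrite -(submK vu) e add0m.
Qed.

Lemma exists_mingens_le (L : R -> Prop) u :
  L 'X_[u] -> exists2 w, mingens L w & (w <= u)%MM.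
Proof.
elim: {u}(mdeg u).+1 {-2}u (ltnSn (mdeg u)) => // n IH u ltun Lu.
have [[v [Lv [vu v_neq_u]]]|no_smaller] :=
  classic (exists v, L 'X_[v] /\ (v <= u)%MM /\ v <> u).
  have [w wmin wv] := IH v (leq_trans (mdeg_lt vu v_neq_u) ltun) Lv.
  by exists w => //; exact: lepm_trans wv vu.
exists u; last exact: lepm_refl.
by split=> // v Lv vu; apply: NNPP => v_neq_u; apply: no_smaller; exists v.
Qed.

Lemma mingens_neq0 (L : R -> Prop) u : ~ L 1 -> mingens L u -> u <> 0%MM.
Proof. by move=> L1 [Lu _] u0; apply: L1; rewrite -mpolyX0 -u0. Qed.

Lemma dstar_mingens (L : R -> Prop) u (i : 'I_m) :
  mingens L u -> (0 < u i)%N -> dstar L 'X_[u - U_(i)].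
Proof. by move=> Lu ui; apply: ideal_gen_base; exists u, i. Qed.

Lemma maxidealX (i : 'I_m) : @maxideal k m 'X_i.
Proof. by apply: ideal_gen_base; exists i. Qed.

Lemma mon_idealX_le (v w : mon) : (v <= w)%MM -> @mon_ideal k m v 'X_[w].
Proof. by move=> vw; rewrite -(submK vw) mpolyXD; exact/ideal_genMl/ideal_gen_base. Qed.

Lemma ideal_mulX (I J : R -> Prop) (a b : mon) :
  I 'X_[a] -> J 'X_[b] -> ideal_mul I J 'X_[a + b].
Proof. by move=> Ia Jb; rewrite mpolyXD; apply: ideal_gen_base; exists 'X_[a], 'X_[b]. Qed.

Definition first_pos (u : mon) (i : 'I_m) : Prop :=
  (0 < u i)%N /\ forall j : 'I_m, (0 < u j)%N -> (i <= j)%N.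

Lemma exists_first_pos (u : mon) (i : 'I_m) : (0 < u i)%N -> exists j, first_pos u j.
Proof.
move=> ui; case: (@arg_minnP _ i (fun j => 0 < u j)%N (fun j : 'I_m => nat_of_ord j) ui).
by move=> j uj jmin; exists j.
Qed.

Lemma exists_first_pos_neq0 (u : mon) : u <> 0%MM -> exists i, first_pos u i.
Proof.
move=> u_neq0; apply: NNPP => nofirst; apply: u_neq0; apply/mnmP => i.
rewrite mnm0E; apply/eqP; rewrite -leqn0 leqNgt; apply/negP => ui.
by apply: nofirst; exact: exists_first_pos ui.
Qed.

Lemma first_pos_subm_le (u L : mon) (i j : 'I_m) :
  (u <= L)%MM -> first_pos u i -> first_pos L j -> (u - U_(i) <= L - U_(j))%MM.
Proof.
move=> /mnm_lepP uL [ui imin] [_ jmin]; apply/mnm_lepP => l; rewrite !mnmBE !mnm1E.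
have [<-|i_neq_j] := eqVneq i j; first exact: leq_sub2r.
have ji : (j <= i)%N := jmin i (leq_trans ui (uL i)).
have uj0 : u j = 0%N.
  apply/eqP; rewrite -leqn0 leqNgt; apply/negP => /imin ij.
  by move/negP: i_neq_j; apply; apply/eqP/val_inj/eqP; rewrite /= eqn_leq ij ji.
have := uL l; case: (i =P l) => [<-|_]; case: (j =P l) => [jl|_] /=; try lia.
by rewrite -jl uj0.
Qed.

Lemma mlcms_ub (s : seq mon) u : u \in s -> (u <= mlcms s)%MM.
Proof.
elim: s => [//|x s IH]; rewrite inE /= => /orP[/eqP->|/IH us]; first exact: lem_mlcml.
exact: lepm_trans us (lem_mlcmr _ _).
Qed.

Lemma mlcms_least (s : seq mon) w :
  (forall u, u \in s -> (u <= w)%MM) -> (mlcms s <= w)%MM.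
Proof.
elim: s => [|x s IH] sw /=; first by apply/mnm_lepP => i; rewrite mnm0E.
by rewrite lem_mlcm sw ?mem_head //= IH // => u us; apply: sw; rewrite inE us orbT.
Qed.

Lemma mlcms_mul_maxideal (phi : mon -> mon) (G : seq mon) :
  G <> [::] ->
  (forall u, u \in G -> exists2 i, first_pos u i & (phi u <= u - U_(i))%MM) ->
  ideal_mul (@mon_ideal k m (mlcms (map phi G))) (@maxideal k m) 'X_[mlcms G].
Proof.
move=> G_neq0 phiG; set L := mlcms G.
have [j Lj] : exists j, first_pos L j.
  case: G G_neq0 phiG @L => [//|u0 G] _ phiG /=.
  have [i [u0i _] _] := phiG u0 (mem_head _ _).
  by apply: (@exists_first_pos _ i); exact: leq_trans u0i (mnm_lepP (lem_mlcml _ _) i).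
have phiG_le : (mlcms (map phi G) <= L - U_(j))%MM.
  apply: mlcms_least => _ /mapP[u uG ->]; have [i ui phiu] := phiG u uG.
  exact: lepm_trans phiu (first_pos_subm_le (mlcms_ub uG) ui Lj).
have jL : (U_(j) <= L)%MM by rewrite lep1mP -lt0n; case: Lj.
by rewrite -(submK jL); apply: ideal_mulX; [exact: mon_idealX_le | exact: maxidealX].
Qed.

Section DStar.
Variables I1 I2 : R -> Prop.
Hypotheses (I2_monomial : monomial_ideal I2) (I1_proper : ~ I1 1).
Hypothesis dstar_sub : forall p, dstar I1 p -> I2 p.

Lemma exists_mingens_below u :
  mingens I1 u ->
  exists v, mingens I2 v /\ exists2 i, first_pos u i & (v <= u - U_(i))%MM.
Proof.
move=> umin; have [i [ui imin]] := exists_first_pos_neq0 (mingens_neq0 I1_proper umin).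
have [v vmin vu] := exists_mingens_le (dstar_sub (dstar_mingens umin ui)).
by exists v; split=> //; exists i.
Qed.

Lemma dstar_sub_mul_maxideal :
  monomial_ideal I1 -> forall p, I1 p -> ideal_mul (@maxideal k m) I2 p.
Proof.
move=> I1_monomial p; apply: (monomial_ideal_sub I1_monomial).
move=> u /exists_mingens_le[w wmin wu].
have [v [vmin [i [wi _] vw]]] := exists_mingens_below wmin.
have iu : (U_(i) <= u)%MM by rewrite lep1mP -lt0n; exact: leq_trans wi (mnm_lepP wu i).
rewrite -(submK iu) addmC; apply: ideal_mulX; first exact: maxidealX.
apply: monomial_idealX_le I2_monomial vmin.1 _; apply: lepm_trans vw _.
by apply/mnm_lepP => l; rewrite !mnmBE leq_sub2r // (mnm_lepP wu).
Qed.

End DStar.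

End MonomialIdeals.

Theorem proposition4p4 (k : fieldType) (m : nat) (I1 I2 : {mpoly k[m]} -> Prop) :
  monomial_ideal I1 -> monomial_ideal I2 ->
  (exists p, I1 p /\ p != 0) -> (exists p, I2 p /\ p != 0) ->
  ~ I1 1 -> ~ I2 1 ->
  (forall p, dstar I1 p -> I2 p) ->
  (forall p, I1 p -> ideal_mul (@maxideal k m) I2 p) /\
  exists phi : 'X_{1..m} -> 'X_{1..m},
    (forall u, mingens I1 u -> mingens I2 (phi u)) /\
    (forall G' : seq 'X_{1..m}, G' <> [::] ->
       (forall u, u \in G' -> mingens I1 u) ->
       ideal_mul (@mon_ideal k m (mlcms (map phi G'))) (@maxideal k m) 'X_[mlcms G']).
Proof.
move=> I1_monomial I2_monomial _ _ I1_proper _ dstar_sub.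
split; first exact: dstar_sub_mul_maxideal.
pose below u v := mingens I2 v /\ exists2 i, first_pos u i & (v <= u - U_(i))%MM.
pose phi u := epsilon (inhabits 0%MM) (below u).
have phiP u : mingens I1 u -> below u (phi u).
  by move=> umin; apply: epsilon_spec; exact: exists_mingens_below umin.
exists phi; split=> [u /phiP[]//|G' G'_neq0 G'min].
by apply: mlcms_mul_maxideal G'_neq0 _ => u /G'min/phiP[].
Qed.
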